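(* Fix an integer $n\ge 2$, and assume that for every choice of positive integers $w_1,\ldots,w_n$ one has either $\mathrm{ML}(w_1,\ldots,w_n)=\frac{s}{ns+1}$ for some $s\in\mathbb{N}$ or $\mathrm{ML}(w_1,\ldots,w_n)\ge\frac1n$. Then for any positive real numbers $v_1,\ldots,v_n$, either $\mathrm{ML}(v_1,\ldots,v_n)=\frac{s}{ns+1}$ for some $s\in\mathbb{N}$, or $\mathrm{ML}(v_1,\ldots,v_n)\ge\frac1n$.
   Context: For a real number $x$, $\Vert x\Vert$ denotes the distance from $x$ to the nearest integer. For positive real numbers $v_1,\ldots,v_k$, the maximum loneliness is $\mathrm{ML}(v_1,\ldots,v_k)=\sup_{t\in\mathbb{R}}\min_{1\le i\le k}\Vert t v_i\Vert$ (for integer speeds the supremum is a maximum). Here $\mathbb{N}=\{1,2,3,\ldots\}$. *)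

From mathcomp Require Import all_boot all_order all_algebra.
From mathcomp Require Import all_classical all_reals.
Set Implicit Arguments. Unset Strict Implicit. Unset Printing Implicit Defensive.
Import Order.TTheory GRing.Theory Num.Theory.
Local Open Scope ring_scope.
Local Open Scope classical_set_scope.

Definition dist_nint (R : realType) (x : R) : R :=
  Num.min (x - (Num.floor x)%:~R) ((Num.ceil x)%:~R - x).

(* Loneliness at time t: min_i ||t v_i|| (n >= 1 in all uses; the
   neutral element 1 is never reached for n >= 1 since ||.|| <= 1/2). *)
Definition lonely (R : realType) (n : nat) (v : 'I_n -> R) (t : R) : R :=
  \big[Num.min/1]_(i < n) dist_nint (t * v i).

Definition ML (R : realType) (n : nat) (v : 'I_n -> R) : R :=
  sup (range (lonely v)).

From mathcomp Require Import all_boot all_order all_algebra.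
From mathcomp Require Import all_classical all_reals.
From mathcomp Require Import ring lra.
Import Order.TTheory GRing.Theory Num.Theory.
Local Open Scope ring_scope.
Local Open Scope classical_set_scope.
Set Implicit Arguments. Unset Strict Implicit. Unset Printing Implicit Defensive.

(* Dirichlet's simultaneous approximation gives T > 0 and positive integers
   m_i with |T v_i - m_i| < d.  Rescaling time by T, and using that integer
   speeds give a 1-periodic loneliness, ML(v) and ML(m) differ by O(d), so
   ML(v) is a limit of maximum loneliness values of integer speeds.  Below
   any c < 1/n only finitely many of the numbers s/(ns+1) occur, so a limit
   of such numbers that stays below 1/n is itself one of them. *)

Section DistNearestInt.
Variable R : realType.
Implicit Types (x y : R) (k : int).

Lemma dist_nint_le x k : dist_nint x <= `|x - k%:~R|.
Proof.
rewrite /dist_nint ge_min; apply/orP.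
have [kx|xk] := lerP k%:~R x.
  left; have : (k%:~R : R) <= (Num.floor x)%:~R by rewrite ler_int floor_ge_int.
  lra.
right; have : ((Num.ceil x)%:~R : R) <= k%:~R by rewrite ler_int ceil_le_int ltW.
lra.
Qed.

Lemma dist_nint_attained x : exists k, dist_nint x = `|x - k%:~R|.
Proof.
rewrite /dist_nint; have [_|_] := leP (x - (Num.floor x)%:~R) ((Num.ceil x)%:~R - x).
  by exists (Num.floor x); rewrite ger0_norm // subr_ge0 floor_le.
by exists (Num.ceil x); rewrite distrC ger0_norm // subr_ge0 ceil_ge.
Qed.

Lemma dist_nint_ge0 x : 0 <= dist_nint x.
Proof. by have [k ->] := dist_nint_attained x. Qed.

Lemma dist_nint_le_add x y k : dist_nint x <= `|x - y - k%:~R| + dist_nint y.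
Proof.
have [l ->] := dist_nint_attained y.
apply: le_trans (dist_nint_le x (k + l)) _.
have -> : x - (k + l)%:~R = (x - y - k%:~R) + (y - l%:~R) by rewrite intrD; ring.
exact: ler_normD.
Qed.

End DistNearestInt.

Section Loneliness.
Variables (R : realType) (n : nat).
Implicit Types (v w : 'I_n -> R) (t : R).

Lemma lonely_ge0 v t : 0 <= lonely v t.
Proof.
apply: (big_ind (fun x => 0 <= x)) => // [x y x0 y0|i _]; last exact: dist_nint_ge0.
by rewrite le_min x0 y0.
Qed.

Lemma lonely_le1 v t : lonely v t <= 1.
Proof.
apply: (big_ind (fun x => x <= 1)) => // [x y x1 _|i _]; first by rewrite ge_min x1.
rewrite /dist_nint ge_min; apply/orP; left.
by have := floor_itv (t * v i); rewrite intrD; lra.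
Qed.

Lemma lonely_le_add v w t s (d : R) : 0 <= d ->
  (forall i, dist_nint (t * v i) <= dist_nint (s * w i) + d) ->
  lonely v t <= lonely w s + d.
Proof.
move=> d0 le_vw; apply: (big_ind2 (fun x y => x <= y + d)) => //; first lra.
move=> x1 y1 x2 y2 le1 le2; have [_|_] := leP y1 y2.
  by rewrite ge_min le1.
by rewrite ge_min le2 orbT.
Qed.

Lemma has_sup_lonely v : has_sup (range (lonely v)).
Proof.
split; first by exists (lonely v 0), 0.
by exists 1 => _ [t _ <-]; exact: lonely_le1.
Qed.

Lemma lonely_le_ML v t : lonely v t <= ML v.
Proof. by apply: sup_upper_bound; [exact: has_sup_lonely | exists t]. Qed.

Lemma ML_ge0 v : 0 <= ML v.
Proof. exact: le_trans (lonely_ge0 v 0) (lonely_le_ML v 0). Qed.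

Lemma ML_le v x : (forall t, lonely v t <= x) -> ML v <= x.
Proof. by move=> le_x; apply: ge_sup => [|_ [t _ <-]]; first by exists (lonely v 0), 0. Qed.

End Loneliness.

Section Dirichlet.
Variable R : realType.

Definition frac (x : R) : R := x - (Num.floor x)%:~R.

Lemma frac_itv (x : R) : 0 <= frac x < 1.
Proof. by rewrite /frac; have := floor_itv x; rewrite intrD => /andP[? ?]; apply/andP; lra. Qed.

Lemma truncn_eq_dist_lt1 (x y : R) : 0 <= x -> 0 <= y ->
  Num.truncn x = Num.truncn y -> `|x - y| < 1.
Proof.
move=> x0 y0 eq_xy; have := truncn_itv x0; have := truncn_itv y0.
rewrite eq_xy !mulrSr => /andP[? ?] /andP[? ?]; rewrite ltr_norml; apply/andP; lra.
Qed.

Lemma exists_frac_close n (v : 'I_n -> R) (N : nat) : (0 < N)%N ->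
  exists a b : nat, (a < b)%N /\
    forall i, `|frac (b%:R * v i) - frac (a%:R * v i)| < N%:R^-1.
Proof.
case: N => // N _.
(* Pigeonhole: more times q than cells of side 1/N in [0,1)^n. *)
pose cell (q : 'I_(#|{ffun 'I_n -> 'I_N.+1}|).+1) : {ffun 'I_n -> 'I_N.+1} :=
  [ffun i => inord (Num.truncn (N.+1%:R * frac (q%:R * v i)))].
have : ~~ injectiveb cell.
  by apply/injectiveP => /leq_card; rewrite card_ord ltnn.
case/injectivePn => q1 [q2 neq_q same_cell].
have close i : `|frac (q2%:R * v i) - frac (q1%:R * v i)| < N.+1%:R^-1.
  have /andP[f1_ge0 _] := frac_itv (q1%:R * v i).
  have /andP[f2_ge0 _] := frac_itv (q2%:R * v i).
  have N_gt0 : (0 : R) < N.+1%:R by [].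
  have cell_lt (f : R) : 0 <= f < 1 -> (Num.truncn (N.+1%:R * f) < N.+1)%N.
    by move=> /andP[? ?]; rewrite truncn_lt_nat ?mulr_ge0 //; nra.
  have := congr1 (fun g : {ffun _ -> _} => val (g i)) same_cell; rewrite /= !ffunE.
  rewrite !inordK ?cell_lt ?frac_itv // => /truncn_eq_dist_lt1.
  rewrite -mulrBr normrM ger0_norm ?mulr_ge0 // distrC -ltr_pdivlMl //.
  by rewrite mulr1; apply.
have [lt12|lt21|eq12] := ltngtP q1 q2.
- by exists q1, q2.
- by exists q2, q1; split=> // i; rewrite distrC.
- by rewrite (val_inj eq12) eqxx in neq_q.
Qed.

Lemma dirichlet_simultaneous n (v : 'I_n -> R) (d : R) : 0 < d ->
  exists T : nat, (0 < T)%N /\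
    exists m : 'I_n -> int, forall i, `|T%:R * v i - (m i)%:~R| < d.
Proof.
move=> d0; pose N := Num.bound d^-1.
have ltN : d^-1 < N%:R by apply: archi_boundP; rewrite invr_ge0 ltW.
have N0 : (0 < N)%N by rewrite -(ltr_nat R); apply: lt_trans ltN; rewrite invr_gt0.
have [a [b [ltab close]]] := exists_frac_close v N0.
exists (b - a)%N; split; first by rewrite subn_gt0.
exists (fun i => Num.floor (b%:R * v i) - Num.floor (a%:R * v i)) => i.
have -> : (b - a)%:R * v i - (Num.floor (b%:R * v i) - Num.floor (a%:R * v i))%:~R
    = frac (b%:R * v i) - frac (a%:R * v i).
  by rewrite /frac natrB 1?ltnW // mulrBl intrB; ring.
apply: lt_trans (close i) _.
by rewrite -[d]invrK ltf_pV2 ?posrE ?invr_gt0 ?ltr0n.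
Qed.

End Dirichlet.

Section IntegerApproximation.
Variables (R : realType) (n : nat) (v : 'I_n -> R) (T : nat) (m : 'I_n -> int) (d : R).
Hypotheses (T_gt0 : (0 < T)%N) (d_ge0 : 0 <= d).
Hypothesis close : forall i, `|T%:R * v i - (m i)%:~R| < d.

Let mR i : R := (m i)%:~R.

Lemma lonely_le_lonely_int t : lonely v t <= lonely mR (t / T%:R) + `|t| * d.
Proof.
apply: lonely_le_add => [|i]; first by rewrite mulr_ge0.
rewrite addrC; apply: le_trans (dist_nint_le_add _ (t / T%:R * mR i) 0) _.
rewrite lerD2r subr0.
have T1 : 1 <= (T%:R : R) by rewrite ler1n.
have -> : t * v i - t / T%:R * mR i = t / T%:R * (T%:R * v i - mR i).
  by field; rewrite pnatr_eq0 -lt0n.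
rewrite normrM normf_div normr_nat; apply: ler_pM; last exact/ltW/close.
- by rewrite divr_ge0.
- by [].
- by rewrite ler_pdivrMr ?ltr0n //; have := normr_ge0 t; nra.
Qed.

Lemma ML_int_le : ML mR <= ML v + d.
Proof.
(* Integer speeds make [lonely mR] 1-periodic: only the fractional part u of t matters. *)
apply: ML_le => t; pose j := Num.floor t; pose u := t - j%:~R.
have /andP[u_ge0 u_lt1] : 0 <= u < 1.
  by have := floor_itv t; rewrite intrD => /andP[? ?]; apply/andP; rewrite /u; lra.
have close_i i : dist_nint (t * mR i) <= dist_nint (u * T%:R * v i) + d.
  rewrite addrC; apply: le_trans (dist_nint_le_add _ (u * T%:R * v i) (j * m i)) _.
  have -> : t * mR i - u * T%:R * v i - (j * m i)%:~R = u * (mR i - T%:R * v i).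
    by rewrite /u intrM; ring.
  by rewrite lerD2r normrM ger0_norm // distrC -[d]mul1r ler_pM // ?ltW.
apply: le_trans (lonely_le_add d_ge0 close_i) _.
by rewrite lerD2r lonely_le_ML.
Qed.

End IntegerApproximation.

Lemma ML_approx_nat (R : realType) n (v : 'I_n -> R) (e : R) :
  (forall i, 0 < v i) -> 0 < e ->
  exists w : 'I_n -> nat, (forall i, (0 < w i)%N) /\
    `|ML (fun i => (w i)%:R : R) - ML v| <= e.
Proof.
move=> v_gt0 e_gt0; have e2_gt0 : 0 < e / 2 by rewrite divr_gt0.
have [_ [t0 _ <-] near_sup] := sup_adherent e2_gt0 (has_sup_lonely v).
rewrite -/(ML v) in near_sup.
pose vmin := \big[Num.min/1]_i v i.
have vmin_gt0 : 0 < vmin by apply: (big_ind (fun x => 0 < x)) => // x y; rewrite lt_min => ->.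
have vmin_le i : vmin <= v i by rewrite /vmin (bigD1 i) //= ge_min lexx.
have t0_gt0 : 0 < `|t0| + 1 by rewrite ltr_pwDr.
(* d <= v_i forces m_i > 0, and |t0| d <= e/2 bounds the rescaling error at t0. *)
pose d := Num.min vmin (e / 2 / (`|t0| + 1)).
have d_gt0 : 0 < d by rewrite lt_min vmin_gt0 divr_gt0.
have d_le_vmin : d <= vmin by rewrite ge_min lexx.
have t0d_le : (`|t0| + 1) * d <= e / 2.
  by rewrite mulrC -ler_pdivlMr // ge_min lexx orbT.
have [T [T_gt0 [m close]]] := dirichlet_simultaneous v d_gt0.
have m_gt0 i : 0 < m i.
  rewrite -(ltr0z R); have := close i; rewrite ltr_norml => /andP[? ?].
  have := vmin_le i; have := v_gt0 i; have : (1 : R) <= T%:R by rewrite ler1n.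
  nra.
exists (fun i => `|m i|%N); split=> [i|]; first by rewrite absz_gt0 gt_eqF.
have -> : (fun i => `|m i|%:R : R) = (fun i => (m i)%:~R).
  by apply: funext => i; rewrite natr_absz gtr0_norm.
have at_t0 := lonely_le_lonely_int T_gt0 (ltW d_gt0) close t0.
have := lonely_le_ML (fun i => (m i)%:~R : R) (t0 / T%:R).
have := ML_int_le (ltW d_gt0) close.
have := normr_ge0 t0; rewrite ler_norml => *; apply/andP; split; nra.
Qed.

Section RatioValues.
Variable R : realType.

Lemma eq_or_apart (f : nat -> R) (M : R) (B : nat) :
  (exists2 s, (0 < s < B)%N & f s = M) \/
  exists2 eta, 0 < eta & forall s, (0 < s < B)%N -> eta <= `|f s - M|.
Proof.
have [/existsP[s /andP[s_gt0 /eqP <-]]|none] :=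
  boolP [exists s : 'I_B, (0 < s)%N && (f s == M)].
  by left; exists (val s); rewrite ?s_gt0 ?ltn_ord.
right; exists (\big[Num.min/1]_(s < B | (0 < s)%N) `|f s - M|).
  apply: (big_ind (fun x => 0 < x)) => // [x y|s s_gt0]; first by rewrite lt_min => ->.
  rewrite normr_gt0 subr_eq0; apply: contra none => fs_eq.
  by apply/existsP; exists s; rewrite s_gt0.
move=> s /andP[s_gt0 lt_sB].
by rewrite (bigD1 (Ordinal lt_sB)) //= ge_min lexx.
Qed.

Lemma ratio_le_bound (n s : nat) (c : R) : c * n%:R < 1 ->
  s%:R / (n * s + 1)%:R <= c -> s%:R <= c / (1 - c * n%:R).
Proof.
move=> cn_lt1; rewrite ler_pdivlMr ?subr_gt0 // ler_pdivrMr ?ltr0n ?addn1 //.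
by rewrite -addn1 natrD natrM; lra.
Qed.

Lemma eq_ratio_of_approx (n : nat) (M : R) : (0 < n)%N -> 0 <= M -> M < 1 / n%:R ->
  (forall e, 0 < e -> exists2 s, (0 < s)%N & `|s%:R / (n * s + 1)%:R - M| <= e) ->
  exists s, (0 < s)%N /\ M = s%:R / (n * s + 1)%:R.
Proof.
move=> n_gt0 M_ge0 M_lt approx; pose c := (M + 1 / n%:R) / 2.
have cn_lt1 : c * n%:R < 1 by rewrite -ltr_pdivlMr ?ltr0n // mul1r; rewrite /c; lra.
pose B := Num.bound (c / (1 - c * n%:R)).
have bounded s : s%:R / (n * s + 1)%:R <= c -> (s < B)%N.
  move/(ratio_le_bound cn_lt1) => le_s; rewrite -(ltr_nat R).
  apply: le_lt_trans le_s (archi_boundP _).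
  by rewrite divr_ge0 ?subr_ge0 ?ltW // /c; lra.
have [[s /andP[s_gt0 _] <-]|[eta eta_gt0 apart]] :=
  eq_or_apart (fun s => s%:R / (n * s + 1)%:R) M B; first by exists s.
have e_gt0 : 0 < Num.min (eta / 2) (c - M) by rewrite lt_min divr_gt0 // subr_gt0 /c; lra.
have [s s_gt0 near_M] := approx _ e_gt0; move: near_M; rewrite le_min => /andP[near1 near2].
have := apart s; rewrite s_gt0 bounded //.
  by move/(_ isT); lra.
by move: near2; rewrite ler_norml => /andP[_]; lra.
Qed.

End RatioValues.

Theorem theorem3p4 (R : realType) (n : nat) (hn : (2 <= n)%N) :
  (forall w : 'I_n -> nat, (forall i, (0 < w i)%N) ->
     (exists s : nat, (0 < s)%N /\
        ML (fun i => (w i)%:R : R) = s%:R / (n * s + 1)%:R)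
     \/ 1 / n%:R <= ML (fun i => (w i)%:R : R)) ->
  forall v : 'I_n -> R, (forall i, 0 < v i) ->
    (exists s : nat, (0 < s)%N /\ ML v = s%:R / (n * s + 1)%:R)
    \/ 1 / n%:R <= ML v.
Proof.
move=> nat_speeds v v_gt0.
have [ML_ge|ML_lt] := lerP (1 / n%:R) (ML v); [by right | left].
apply: (eq_ratio_of_approx (ltnW hn) (ML_ge0 v) ML_lt) => e e_gt0.
have e'_gt0 : 0 < Num.min e ((1 / n%:R - ML v) / 2).
  by rewrite lt_min e_gt0 divr_gt0 ?subr_gt0.
have [w [w_gt0 near_v]] := ML_approx_nat v_gt0 e'_gt0.
move: near_v; rewrite le_min => /andP[near_e]; rewrite ler_norml => /andP[_ near_gap].
case: (nat_speeds w w_gt0) => [[s [s_gt0 MLw_eq]]|]; last by lra.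
by exists s; rewrite // -MLw_eq.
Qed.
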